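(* Let $n\ge 2$ and $\Omega=\{x\in\mathbb{R}^n:0<|x|<1\}$, so $\partial\Omega=\{|x|=1\}\cup\{0\}$. Then the Dirichlet problem \[ Q_\infty u=0\ \text{ in }\Omega,\qquad u(x)=x\ \text{ for }x\in\partial\Omega, \] admits infinitely many solutions $u\in C^\infty(\Omega;\mathbb{R}^n)\cap C^0(\overline\Omega;\mathbb{R}^n)$ with $\det Du\neq0$ on $\Omega$. More precisely, for every $\gamma>-1$ the map $u(x)=|x|^\gamma x$ (with $u(0)=0$) is such a solution and is a diffeomorphism of $\Omega$ onto itself.
   Context: Define the dilation $K:\mathbb{R}^{n\times n}\to[0,\infty]$ by $K(P)=|P|^2/\det(P^\top P)^{1/n}$ if $\operatorname{rk}(P)=n$ and $K(P)=+\infty$ otherwise, where $|P|^2=\sum_{\alpha,i}P_{\alpha i}^2$. $K$ is smooth on the open set of invertible matrices; write $K_P(P)\in\mathbb{R}^{n\times n}$ for the matrix of first partial derivatives $\partial K/\partial P_{\alpha i}$ and $K_{PP}$ for the second derivatives $\partial^2K/\partial P_{\alpha i}\partial P_{\beta j}$. For $u\in C^2(\Omega;\mathbb{R}^n)$ with $Du$ invertible everywhere, define \[ (Q_\infty u)_\alpha:=\sum_{i,j,\beta}\Big(K_{P_{\alpha i}}(Du)K_{P_{\beta j}}(Du)+\sum_{\gamma}[K_P(Du)]^\perp_{\alpha\gamma}K_{P_{\gamma i}P_{\beta j}}(Du)\Big)D^2_{ij}u_\beta, \] where $[K_P(Du(x))]^\perp$ is the orthogonal projection of $\mathbb{R}^n$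 onto the null space of $K_P(Du(x))^\top$. *)

From Stdlib Require Import Reals.
From mathcomp Require Import ssreflect ssrfun ssrbool eqtype ssrnat seq choice
  fintype finfun bigop fingroup perm.
Set Implicit Arguments.
Unset Strict Implicit.
Open Scope R_scope.

Definition vec (n : nat) := 'I_n -> R.
Definition mat (n : nat) := 'I_n -> 'I_n -> R.

Definition rsum (n : nat) (f : 'I_n -> R) : R := \big[Rplus/R0]_(i : 'I_n) f i.

Definition dot (n : nat) (x y : vec n) : R := rsum (fun i => x i * y i).
Definition norm (n : nat) (x : vec n) : R := sqrt (dot x x).
Definition vadd (n : nat) (x y : vec n) : vec n := fun i => x i + y i.
Definition vscale (n : nat) (t : R) (x : vec n) : vec n := fun i => t * x i.
Definition vzero (n : nat) : vec n := fun _ => 0.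
Definition basis (n : nat) (j : 'I_n) : vec n := fun i => if i == j then 1 else 0.
Definition dist (n : nat) (x y : vec n) : R := norm (fun i => x i - y i).

Definition Omega (n : nat) (x : vec n) : Prop := 0 < norm x < 1.
Definition closure_Omega (n : nat) (x : vec n) : Prop := norm x <= 1.
Definition boundary_Omega (n : nat) (x : vec n) : Prop :=
  norm x = 1 \/ x = @vzero n.

Definition cont_on (n : nat) (U : vec n -> Prop) (g : vec n -> R) : Prop :=
  forall x, U x -> forall eps, 0 < eps -> exists delta, 0 < delta /\
    forall y, U y -> dist y x < delta -> Rabs (g y - g x) < eps.
Definition cont_map (n : nat) (U : vec n -> Prop) (u : vec n -> vec n) : Prop :=
  forall a, cont_on U (fun x => u x a).

(* D l is the iterated partial derivative along the list l of
   coordinate directions (D [::] = f, D (j :: l) = d_j (D l)). *)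
Definition smooth_on (n : nat) (U : vec n -> Prop) (f : vec n -> R) : Prop :=
  exists D : seq 'I_n -> vec n -> R,
    (forall x, U x -> D [::] x = f x) /\
    forall l, cont_on U (D l) /\
      forall x, U x -> forall j,
        derivable_pt_lim (fun t => D l (vadd x (vscale t (basis j)))) 0
          (D (j :: l) x).
Definition smooth_map (n : nat) (U : vec n -> Prop) (u : vec n -> vec n) : Prop :=
  forall a, smooth_on U (fun x => u x a).

(* Du x a i = d_i u_a (x);  D2u x b i j = d_i d_j u_b (x) *)
Definition isDu (n : nat) (U : vec n -> Prop) (u : vec n -> vec n)
  (Du : vec n -> mat n) : Prop :=
  forall x, U x -> forall a i,
    derivable_pt_lim (fun t => u (vadd x (vscale t (basis i))) a) 0 (Du x a i).
Definition isD2u (n : nat) (U : vec n -> Prop) (Du : vec n -> mat n)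
  (D2u : vec n -> 'I_n -> 'I_n -> 'I_n -> R) : Prop :=
  forall x, U x -> forall b i j,
    derivable_pt_lim (fun t => Du (vadd x (vscale t (basis i))) b j) 0
      (D2u x b i j).

Definition madd (n : nat) (P Q : mat n) : mat n := fun a i => P a i + Q a i.
Definition mscale (n : nat) (t : R) (P : mat n) : mat n := fun a i => t * P a i.
Definition matE (n : nat) (a i : 'I_n) : mat n :=
  fun b j => if (b == a) && (j == i) then 1 else 0.
Definition psign (n : nat) (s : 'S_n) : R := if odd_perm s then -1 else 1.
Definition det (n : nat) (P : mat n) : R :=
  \big[Rplus/R0]_(s : 'S_n) (psign s * \big[Rmult/R1]_(i : 'I_n) P i (s i)).
Definition mtm (n : nat) (P : mat n) : mat n :=
  fun a b => rsum (fun k => P k a * P k b).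
Definition frob2 (n : nat) (P : mat n) : R :=
  rsum (fun a => rsum (fun i => P a i ^ 2)).

(* The dilation K on invertible matrices (rank n <-> det <> 0), where it is
   finite; K = +infinity elsewhere, but only its values/derivatives on the
   open set of invertible matrices are used. *)
Definition Kfin (n : nat) (P : mat n) : R :=
  frob2 P / Rpower (det (mtm P)) (/ INR n).

(* KP P a i = dK/dP_{a i} (P); KPP P g i b j = d^2 K / dP_{g i} dP_{b j} (P) *)
Definition Kgrad (n : nat) (KP : mat n -> mat n) : Prop :=
  forall P, det P <> 0 -> forall a i,
    derivable_pt_lim (fun t => Kfin (madd P (mscale t (matE a i)))) 0 (KP P a i).
Definition Khess (n : nat) (KP : mat n -> mat n)
  (KPP : mat n -> 'I_n -> 'I_n -> 'I_n -> 'I_n -> R) : Prop :=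
  forall P, det P <> 0 -> forall g i b j,
    derivable_pt_lim (fun t => KP (madd P (mscale t (matE b j))) g i) 0
      (KPP P g i b j).

Definition in_null_tr (n : nat) (A : mat n) (w : vec n) : Prop :=
  forall i, rsum (fun a => A a i * w a) = 0.
Definition matvec (n : nat) (M : mat n) (v : vec n) : vec n :=
  fun a => rsum (fun g => M a g * v g).
Definition orth_proj_null_tr (n : nat) (A Pi : mat n) : Prop :=
  (forall v, in_null_tr A (matvec Pi v)) /\
  (forall v w, in_null_tr A w -> dot (fun a => v a - matvec Pi v a) w = 0).

(* (Q_infty u)_a at a point, from P = Du(x), KP(P), KPP(P), Pi = [KP(P)]^perp
   and the Hessian D2 b i j = D^2_{ij} u_b (x) *)
Definition Qinf_comp (n : nat) (KPx : mat n)
  (KPPx : 'I_n -> 'I_n -> 'I_n -> 'I_n -> R) (Pi : mat n)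
  (D2 : 'I_n -> 'I_n -> 'I_n -> R) (a : 'I_n) : R :=
  rsum (fun i => rsum (fun j => rsum (fun b =>
    (KPx a i * KPx b j + rsum (fun g => Pi a g * KPPx g i b j)) * D2 b i j))).

Definition is_Qinf_solution (n : nat) (u : vec n -> vec n) : Prop :=
  smooth_map (@Omega n) u /\
  cont_map (@closure_Omega n) u /\
  (forall x, boundary_Omega x -> u x = x) /\
  forall Du D2u, isDu (@Omega n) u Du -> isD2u (@Omega n) Du D2u ->
    forall x, Omega x ->
      det (Du x) <> 0 /\
      forall KP KPP Pi, Kgrad KP -> Khess KP KPP ->
        orth_proj_null_tr (KP (Du x)) Pi ->
        forall a, Qinf_comp (KP (Du x)) (KPP (Du x)) Pi (D2u x) a = 0.

Definition diffeo_onto_self (n : nat) (U : vec n -> Prop) (u : vec n -> vec n)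
  : Prop :=
  smooth_map U u /\ (forall x, U x -> U (u x)) /\
  exists v, smooth_map U v /\ (forall y, U y -> U (v y)) /\
    (forall x, U x -> v (u x) = x) /\ (forall y, U y -> u (v y) = y).

Definition u_gamma (n : nat) (gamma : R) (x : vec n) : vec n :=
  if Req_dec_T (norm x) 0 then @vzero n else vscale (Rpower (norm x) gamma) x.

From Pilot Require Import Defs.
From Stdlib Require Import Reals Lra FunctionalExtensionality.
From mathcomp Require Import all_boot ssralg matrix.
From mathcomp Require Import Rstruct.
From Coquelicot Require Import Coquelicot.
(* Coquelicot's [norm] must not shadow the Euclidean norm of [Defs]. *)
Import Defs.
Open Scope R_scope.

(** For x <> 0 every component of u_gamma(x) = |x|^gamma x is a finite sum of
   terms c |x|^(2e) x_{l1}...x_{lk}.  We differentiate such expressions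
   formally and show that the formal derivative is the true partial
   derivative; this gives smoothness on Omega and the closed forms
     Du = |x|^gamma (I + gamma x x^T/|x|^2),   D^2 u = (explicit tensor).
   By Cramer's rule and the affinity of det along E_{ai}, the gradient of the
   dilation at an invertible P is K_P(P) = 2 (P - |P|^2/n P^-T) / det(P)^(2/n);
   along u_gamma it has the form c (A I + B x x^T).  For gamma <> 0 (and
   gamma > -1, n >= 2) the scalars c, A, A + B|x|^2 are nonzero, so K_P(Du) is
   invertible, the projection onto the null space of K_P(Du)^T is zero, and an
   explicit contraction shows K_P(Du) : D^2 u = 0; for gamma = 0, D^2 u = 0.
   Continuity at 0 follows from |u_gamma(x)| = |x|^(gamma+1), the inverse
   diffeomorphism is u_gamma' with (1 + gamma)(1 + gamma') = 1, and gamma is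
   recovered from u_gamma(e_1/2). *)

Definition kdelta {n : nat} (i j : 'I_n) : R := if i == j then 1 else 0.

Lemma kdelta_sym {n} (i j : 'I_n) : kdelta i j = kdelta j i.
Proof. by rewrite /kdelta eq_sym. Qed.

Lemma kdelta_refl {n} (i : 'I_n) : kdelta i i = 1.
Proof. by rewrite /kdelta eqxx. Qed.

Lemma rsum_ext {n} {f g : 'I_n -> R} : (forall i, f i = g i) -> rsum f = rsum g.
Proof. by move=> efg; rewrite /rsum; apply: eq_bigr => i _. Qed.

Lemma rsum_add {n} (f g : 'I_n -> R) :
  rsum (fun i => f i + g i) = rsum f + rsum g.
Proof. by rewrite /rsum big_split. Qed.

Lemma rsum_scal {n} (c : R) (f : 'I_n -> R) : rsum (fun i => c * f i) = c * rsum f.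
Proof. by rewrite /rsum big_distrr. Qed.

Lemma rsum_eq0 {n} (f : 'I_n -> R) : (forall i, f i = 0) -> rsum f = 0.
Proof. by move=> f0; rewrite /rsum big1. Qed.

Lemma rsum_const {n} (c : R) : rsum (fun _ : 'I_n => c) = INR n * c.
Proof.
rewrite /rsum big_const_ord; elim: n => [|n IH] /=; first ring.
by rewrite IH; case: n {IH} => [|n] /=; ring.
Qed.

Lemma rsum_kdelta {n} (k : 'I_n) (f : 'I_n -> R) :
  rsum (fun i => kdelta i k * f i) = f k.
Proof.
rewrite /rsum (bigD1 k) //= big1 /kdelta ?eqxx; first ring.
by move=> i /negbTE ->; ring.
Qed.

Lemma rsum_ge_term {n} (f : 'I_n -> R) (k : 'I_n) :
  (forall i, 0 <= f i) -> f k <= rsum f.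
Proof.
move=> f_ge0; rewrite /rsum (bigD1 k) //=.
rewrite -{1}(Rplus_0_r (f k)); apply: Rplus_le_compat_l.
by elim/big_rec: _ => [|i s _ s_ge0]; [lra | have := f_ge0 i; lra].
Qed.

Definition sqn {n : nat} (x : vec n) : R := dot x x.

Definition line {n : nat} (x : vec n) (j : 'I_n) (t : R) : vec n :=
  vadd x (vscale t (basis j)).

Lemma sqn_rsum {n} (x : vec n) : rsum (fun i => x i * x i) = sqn x.
Proof. by []. Qed.

Lemma norm_sqn {n} (x : vec n) : norm x = sqrt (sqn x).
Proof. by []. Qed.

Lemma coord_sq_le_sqn {n} (x : vec n) (i : 'I_n) : x i * x i <= sqn x.
Proof. by apply: (rsum_ge_term (fun i => x i * x i)) => k; nra. Qed.

Lemma sqn_ge0 {n} (x : vec n) : 0 <= sqn x.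
Proof.
rewrite /sqn /dot /rsum.
by elim/big_rec: _ => [|i s _ s_ge0]; [lra | nra].
Qed.

Lemma coord_le_norm {n} (x : vec n) (i : 'I_n) : Rabs (x i) <= norm x.
Proof.
rewrite norm_sqn -sqrt_Rsqr_abs; apply: sqrt_le_1_alt.
exact: coord_sq_le_sqn.
Qed.

Lemma coord_eq0 {n} (x : vec n) (k : 'I_n) : sqn x = 0 -> x k = 0.
Proof. by move=> x0; have := coord_sq_le_sqn x k; rewrite x0 => ?; nra. Qed.

Lemma line_coord {n} (x : vec n) (j k : 'I_n) (t : R) :
  line x j t k = x k + t * kdelta k j.
Proof. by []. Qed.

Lemma line0 {n} (x : vec n) (j : 'I_n) : line x j 0 = x.
Proof. by apply: functional_extensionality => k; rewrite line_coord; ring. Qed.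

Lemma sqn_line {n} (x : vec n) (j : 'I_n) (t : R) :
  sqn (line x j t) = sqn x + 2 * t * x j + t ^ 2.
Proof.
rewrite /sqn /dot (rsum_ext (g := fun i => x i * x i + (2 * t) * (kdelta i j * x i)
  + t ^ 2 * (kdelta i j * 1))); first by rewrite !rsum_add !rsum_scal !rsum_kdelta; ring.
by move=> i; rewrite line_coord /kdelta; case: (i == j); ring.
Qed.

Lemma norm_scale {n} (x : vec n) (c : R) : norm (vscale c x) = Rabs c * norm x.
Proof.
rewrite !norm_sqn.
have -> : sqn (vscale c x) = c ^ 2 * sqn x.
  by rewrite /sqn /dot -rsum_scal; apply: rsum_ext => i; rewrite /vscale; ring.
rewrite sqrt_mult_alt; last exact: pow2_ge_0.
by rewrite -(sqrt_Rsqr_abs c) /Rsqr /= Rmult_1_r.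
Qed.

Lemma Omega_sqn {n} (x : vec n) : Omega x <-> 0 < sqn x < 1.
Proof.
rewrite /Omega norm_sqn; have := sqn_ge0 x; split.
- move=> [h1 h2]; split.
  + by case: (Req_dec (sqn x) 0) => e; [rewrite e sqrt_0 in h1|]; lra.
  + by rewrite -sqrt_1 in h2; apply: sqrt_lt_0_alt.
- move=> [h1 h2]; split; first exact: sqrt_lt_R0.
  by rewrite -sqrt_1; apply: sqrt_lt_1_alt; lra.
Qed.

Lemma norm_pos {n} (x : vec n) : 0 < sqn x -> 0 < norm x.
Proof. by move=> x_pos; rewrite norm_sqn; apply: sqrt_lt_R0. Qed.

Lemma Rpower_pos (x y : R) : 0 < Rpower x y.
Proof. exact: exp_pos. Qed.

Lemma Rpower_norm {n} (x : vec n) (g : R) : 0 < sqn x ->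
  Rpower (norm x) g = Rpower (sqn x) (g / 2).
Proof.
by move=> x_pos; rewrite norm_sqn -Rpower_sqrt // Rpower_mult; congr Rpower; field.
Qed.

Definition cont_at {n : nat} (x : vec n) (g : vec n -> R) : Prop :=
  forall eps, 0 < eps -> exists d, 0 < d /\
    forall y, dist y x < d -> Rabs (g y - g x) < eps.

Lemma cont_on_of_cont_at {n} (U : vec n -> Prop) (g : vec n -> R) :
  (forall x, U x -> cont_at x g) -> cont_on U g.
Proof.
move=> g_cont x Ux e e_pos; case: (g_cont x Ux e e_pos) => d [d_pos Hd].
by exists d; split => // y _; apply: Hd.
Qed.

Lemma dist_self {n} (x : vec n) : dist x x = 0.
Proof.
rewrite /dist norm_sqn /sqn /dot rsum_eq0 ?sqrt_0 // => k; ring.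
Qed.

Lemma cont_at_local {n} (x : vec n) {f h : vec n -> R} :
  (exists d, 0 < d /\ forall y, dist y x < d -> f y = h y) ->
  cont_at x h -> cont_at x f.
Proof.
move=> [d [d_pos fh]] h_cont e e_pos; case: (h_cont e e_pos) => d' [d'_pos Hd'].
exists (Rmin d d'); split; first exact: Rmin_pos.
move=> y hy; rewrite (fh y) ?(fh x) ?dist_self //.
- exact: Hd' (Rlt_le_trans _ _ _ hy (Rmin_r _ _)).
- exact: Rlt_le_trans hy (Rmin_l _ _).
Qed.

Lemma cont_at_const {n} (x : vec n) (c : R) : cont_at x (fun _ => c).
Proof.
move=> e e_pos; exists 1; split => [|y _]; first lra.
by rewrite Rminus_diag_eq // Rabs_R0.
Qed.

Lemma cont_at_coord {n} (x : vec n) (i : 'I_n) : cont_at x (fun y => y i).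
Proof.
move=> e e_pos; exists e; split => // y hy.
exact: Rle_lt_trans (coord_le_norm (fun k => y k - x k) i) hy.
Qed.

Lemma cont_at_add {n} (x : vec n) {f g : vec n -> R} :
  cont_at x f -> cont_at x g -> cont_at x (fun y => f y + g y).
Proof.
move=> f_cont g_cont e e_pos.
case: (f_cont (e / 2)) => [|d1 [d1_pos H1]]; first lra.
case: (g_cont (e / 2)) => [|d2 [d2_pos H2]]; first lra.
exists (Rmin d1 d2); split; first exact: Rmin_pos.
move=> y hy.
have := H1 y (Rlt_le_trans _ _ _ hy (Rmin_l _ _)).
have := H2 y (Rlt_le_trans _ _ _ hy (Rmin_r _ _)).
have -> : f y + g y - (f x + g x) = (f y - f x) + (g y - g x) by ring.
by have := Rabs_triang (f y - f x) (g y - g x); lra.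
Qed.

Lemma cont_at_comp {n} (x : vec n) {g : vec n -> R} {h : R -> R} :
  cont_at x g -> continuity_pt h (g x) -> cont_at x (fun y => h (g y)).
Proof.
move=> g_cont h_cont e e_pos.
case: (h_cont e e_pos) => a [a_pos Ha].
case: (g_cont a a_pos) => d [d_pos Hd].
exists d; split => // y hy.
case: (Req_dec (g x) (g y)) => gxy; first by rewrite -gxy Rminus_diag_eq ?Rabs_R0.
by apply: (Ha (g y)); split; [split | apply: Hd].
Qed.

Lemma continuity_of_derivable {f : R -> R} {t l : R} :
  derivable_pt_lim f t l -> continuity_pt f t.
Proof. by move=> df; apply: derivable_continuous_pt; exists l. Qed.

Lemma cont_at_mul {n} (x : vec n) {f g : vec n -> R} :
  cont_at x f -> cont_at x g -> cont_at x (fun y => f y * g y).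
Proof.
have scal c (h : vec n -> R) : cont_at x h -> cont_at x (fun y => c * h y).
  move=> h_cont; apply: (cont_at_comp x (h := fun z => c * z) h_cont).
  apply: (continuity_of_derivable (l := c)).
  by apply/is_derive_Reals; auto_derive => //; ring.
have sq (h : vec n -> R) : cont_at x h -> cont_at x (fun y => h y * h y).
  move=> h_cont; apply: (cont_at_comp x (h := fun z => z * z) h_cont).
  apply: (continuity_of_derivable (l := 2 * h x)).
  by apply/is_derive_Reals; auto_derive => //; ring.
(* polarization: f g = ((f + g)^2 - (f - g)^2) / 4 *)
move=> f_cont g_cont.
have -> : (fun y => f y * g y) = (fun y => / 4 * ((f y + g y) * (f y + g y))
    + - / 4 * ((f y + -1 * g y) * (f y + -1 * g y))).
  by apply: functional_extensionality => y; field.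
apply: cont_at_add; [apply: (scal (/4)) | apply: (scal (- /4))]; apply: sq.
- exact: cont_at_add.
- by apply: cont_at_add => //; apply: (scal (-1) g).
Qed.

Lemma cont_at_rsum {n} (x : vec n) {F : 'I_n -> vec n -> R} :
  (forall k, cont_at x (F k)) -> cont_at x (fun y => rsum (fun k => F k y)).
Proof.
rewrite /rsum => F_cont; elim: (index_enum 'I_n) => [|k r IH].
- have -> : (fun y => \big[Rplus/0]_(k <- [::]) F k y) = (fun _ => 0).
    by apply: functional_extensionality => y; rewrite big_nil.
  exact: cont_at_const.
- have -> : (fun y => \big[Rplus/0]_(i <- k :: r) F i y) =
            (fun y => F k y + \big[Rplus/0]_(i <- r) F i y).
    by apply: functional_extensionality => y; rewrite big_cons.
  exact: cont_at_add.
Qed.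

Lemma cont_at_sqn {n} (x : vec n) : cont_at x sqn.
Proof.
by apply: (cont_at_rsum x (F := fun k y => y k * y k)) => k;
  apply: cont_at_mul; apply: cont_at_coord.
Qed.

Lemma sqn_pos_near {n} (x : vec n) : 0 < sqn x ->
  exists d, 0 < d /\ forall y, dist y x < d -> 0 < sqn y.
Proof.
move=> x_pos; case: (cont_at_sqn x (sqn x) x_pos) => d [d_pos Hd].
by exists d; split => // y /Hd /Rabs_def2; lra.
Qed.

Lemma dlim_mult {f g : R -> R} {a lf lg l : R} :
  derivable_pt_lim f a lf -> derivable_pt_lim g a lg ->
  l = lf * g a + f a * lg -> derivable_pt_lim (fun t => f t * g t) a l.
Proof. by move=> df dg ->; apply: derivable_pt_lim_mult. Qed.

Lemma dlim_plus {f g : R -> R} {a lf lg : R} :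
  derivable_pt_lim f a lf -> derivable_pt_lim g a lg ->
  derivable_pt_lim (fun t => f t + g t) a (lf + lg).
Proof. exact: derivable_pt_lim_plus. Qed.

Lemma dlim_ext {f g : R -> R} {a l : R} :
  (forall t, f t = g t) -> derivable_pt_lim g a l -> derivable_pt_lim f a l.
Proof. by move=> fg; have -> : f = g by apply: functional_extensionality. Qed.

Lemma dlim_local {f g : R -> R} {l : R} :
  (exists d, 0 < d /\ forall t, Rabs t < d -> f t = g t) ->
  derivable_pt_lim g 0 l -> derivable_pt_lim f 0 l.
Proof.
move=> [d [d_pos fg]] dg e e_pos; case: (dg e e_pos) => dl Hdl.
have m_pos : 0 < Rmin d dl by apply: Rmin_pos => //; apply: cond_pos.
exists (mkposreal _ m_pos) => h h0 /= hh.
rewrite (fg (0 + h)) ?(fg 0) ?Rabs_R0 //.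
- by apply: Hdl => //; apply: Rlt_le_trans hh (Rmin_r _ _).
- by rewrite Rplus_0_l; apply: Rlt_le_trans hh (Rmin_l _ _).
Qed.

Lemma d_line_coord {n} (x : vec n) (j k : 'I_n) :
  derivable_pt_lim (fun t => line x j t k) 0 (kdelta k j).
Proof.
apply: (dlim_ext (g := fun t => x k + t * kdelta k j)) => // .
by apply/is_derive_Reals; auto_derive => //; ring.
Qed.

Lemma d_sqn_pow {n} (x : vec n) (j : 'I_n) (e : R) : 0 < sqn x ->
  derivable_pt_lim (fun t => Rpower (sqn (line x j t)) e) 0
    (e * Rpower (sqn x) (e - 1) * (2 * x j)).
Proof.
move=> x_pos.
have d_sqn : derivable_pt_lim (fun t => sqn (line x j t)) 0 (2 * x j).
  apply: (dlim_ext (g := fun t => sqn x + 2 * t * x j + t ^ 2)).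
    by move=> t; rewrite sqn_line.
  by apply/is_derive_Reals; auto_derive => //; ring.
have := derivable_pt_lim_comp _ (fun z => Rpower z e) _ _ _ d_sqn.
rewrite line0; apply; exact: derivable_pt_lim_power.
Qed.

(** * A calculus of formal expressions *)

Definition term (n : nat) := (R * R * seq 'I_n)%type.

Fixpoint prodl {n : nat} (L : seq 'I_n) (x : vec n) : R :=
  if L is l :: L' then x l * prodl L' x else 1.

Definition eval_term {n : nat} (t : term n) (x : vec n) : R :=
  let: (c, e, L) := t in c * Rpower (sqn x) e * prodl L x.

Fixpoint eval_expr {n : nat} (ts : seq (term n)) (x : vec n) : R :=
  if ts is t :: ts' then eval_term t x + eval_expr ts' x else 0.

Fixpoint d_prodl {n : nat} (j : 'I_n) (L : seq 'I_n) : seq (R * seq 'I_n) :=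
  if L is l :: L' then
    (kdelta l j, L') :: map (fun p => (p.1, l :: p.2)) (d_prodl j L')
  else [::].

Fixpoint eval_poly {n : nat} (ps : seq (R * seq 'I_n)) (x : vec n) : R :=
  if ps is p :: ps' then p.1 * prodl p.2 x + eval_poly ps' x else 0.

(* Leibniz rule: d_j (c |x|^(2e) m) = 2ce |x|^(2e-2) x_j m + c |x|^(2e) d_j m *)
Definition d_term {n : nat} (j : 'I_n) (t : term n) : seq (term n) :=
  let: (c, e, L) := t in
  (c * e * 2, e - 1, j :: L) :: map (fun p => (c * p.1, e, p.2)) (d_prodl j L).

Fixpoint d_expr {n : nat} (j : 'I_n) (ts : seq (term n)) : seq (term n) :=
  if ts is t :: ts' then d_term j t ++ d_expr j ts' else [::].

Fixpoint d_iter {n : nat} (ts : seq (term n)) (l : seq 'I_n) : seq (term n) :=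
  if l is j :: l' then d_expr j (d_iter ts l') else ts.

Lemma eval_poly_cons {n} (ps : seq (R * seq 'I_n)) (l : 'I_n) (x : vec n) :
  eval_poly (map (fun p => (p.1, l :: p.2)) ps) x = x l * eval_poly ps x.
Proof. by elim: ps => [|p ps IH] /=; [|rewrite IH]; ring. Qed.

Lemma eval_expr_cat {n} (a b : seq (term n)) (x : vec n) :
  eval_expr (a ++ b) x = eval_expr a x + eval_expr b x.
Proof. by elim: a => [|t a IH] /=; [|rewrite IH]; ring. Qed.

Lemma eval_expr_scale {n} (ps : seq (R * seq 'I_n)) (c e : R) (x : vec n) :
  eval_expr (map (fun p => (c * p.1, e, p.2)) ps) x =
  c * Rpower (sqn x) e * eval_poly ps x.
Proof. by elim: ps => [|p ps IH] /=; [|rewrite IH]; ring. Qed.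

Lemma d_prodl_correct {n} (x : vec n) (j : 'I_n) (L : seq 'I_n) :
  derivable_pt_lim (fun t => prodl L (line x j t)) 0 (eval_poly (d_prodl j L) x).
Proof.
elim: L => [|l L IH] /=; first exact: derivable_pt_lim_const.
apply: (dlim_mult (d_line_coord x j l) IH).
by rewrite eval_poly_cons /= line0; ring.
Qed.

Lemma d_term_correct {n} (x : vec n) (j : 'I_n) (t : term n) : 0 < sqn x ->
  derivable_pt_lim (fun s => eval_term t (line x j s)) 0 (eval_expr (d_term j t) x).
Proof.
move=> x_pos; case: t => [[c e] L] /=.
have d_pow := dlim_mult (derivable_pt_lim_const c 0) (d_sqn_pow x j e x_pos) (erefl _).
apply: (dlim_mult d_pow (d_prodl_correct x j L)).
by rewrite eval_expr_scale !line0 /fct_cte /=; ring.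
Qed.

Lemma d_expr_correct {n} (x : vec n) (j : 'I_n) (ts : seq (term n)) : 0 < sqn x ->
  derivable_pt_lim (fun s => eval_expr ts (line x j s)) 0 (eval_expr (d_expr j ts) x).
Proof.
move=> x_pos; elim: ts => [|t ts IH] /=; first exact: derivable_pt_lim_const.
by rewrite eval_expr_cat; apply: dlim_plus => //; apply: d_term_correct.
Qed.

Lemma cont_at_eval_expr {n} (x : vec n) (ts : seq (term n)) : 0 < sqn x ->
  cont_at x (eval_expr ts).
Proof.
move=> x_pos; elim: ts => [|[[c e] L] ts IH] /=; first exact: cont_at_const.
apply: (cont_at_add x (f := eval_term (c, e, L))) => //=.
apply: cont_at_mul; last first.
  by elim: L => [|l L IHL] /=; [apply: cont_at_const | apply: cont_at_mul => //; apply: cont_at_coord].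
apply: (cont_at_mul x (f := fun _ => c)); first exact: cont_at_const.
apply: (cont_at_comp x (h := fun z => Rpower z e) (cont_at_sqn x)).
exact: continuity_of_derivable (derivable_pt_lim_power _ e x_pos).
Qed.

Lemma smooth_of_expr {n} (ts : seq (term n)) (f : vec n -> R) :
  (forall x, Omega x -> eval_expr ts x = f x) -> smooth_on (@Omega n) f.
Proof.
move=> ts_f; exists (fun l => eval_expr (d_iter ts l)); split => // l; split.
- by apply: cont_on_of_cont_at => x /Omega_sqn [x_pos _]; apply: cont_at_eval_expr.
- by move=> x /Omega_sqn [x_pos _] j /=; apply: d_expr_correct.
Qed.

(** * The maps [u_gamma] on [Omega]: smoothness and derivatives *)

Lemma u_gamma_val {n} (g : R) (x : vec n) (a : 'I_n) : 0 < sqn x ->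
  u_gamma g x a = Rpower (sqn x) (g / 2) * x a.
Proof.
move=> x_pos; rewrite /u_gamma; case: Req_dec_T => norm_x.
- by have := norm_pos x x_pos; lra.
- by rewrite /vscale Rpower_norm.
Qed.

Definition u_expr {n : nat} (g : R) (a : 'I_n) : seq (term n) :=
  [:: (1, g / 2, [:: a])].

Lemma eval_u_expr {n} (g : R) (a : 'I_n) (x : vec n) : 0 < sqn x ->
  eval_expr (u_expr g a) x = u_gamma g x a.
Proof. by move=> x_pos; rewrite u_gamma_val //=; ring. Qed.

Lemma u_gamma_smooth {n} (g : R) : smooth_map (@Omega n) (u_gamma g).
Proof.
move=> a; apply: (smooth_of_expr (u_expr g a)) => x /Omega_sqn [x_pos _].
exact: eval_u_expr.
Qed.

Lemma Omega_line_near {n} (x : vec n) (j : 'I_n) : Omega x ->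
  exists d, 0 < d /\ forall t, Rabs t < d -> Omega (line x j t).
Proof.
move=> /Omega_sqn [x_pos x_lt1].
have c_pos : 0 < Rmin (sqn x) (1 - sqn x) by apply: Rmin_pos; lra.
have c_le := Rmin_l (sqn x) (1 - sqn x); have c_le' := Rmin_r (sqn x) (1 - sqn x).
have q_cont : continuity_pt (fun t => sqn x + 2 * t * x j + t ^ 2) 0.
  apply: (continuity_of_derivable (l := 2 * x j)).
  by apply/is_derive_Reals; auto_derive => //; ring.
case: (q_cont _ c_pos) => d [d_pos Hd].
exists d; split => // t ht; apply/Omega_sqn; rewrite sqn_line.
case: (Req_dec t 0) => [->|t0]; first by simpl; lra.
have : Rabs (sqn x + 2 * t * x j + t ^ 2 - (sqn x + 2 * 0 * x j + 0 ^ 2)) <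
       Rmin (sqn x) (1 - sqn x).
  apply: (Hd t); split; first by split => //; auto.
  by rewrite /= /R_dist Rminus_0_r.
by move/Rabs_def2; lra.
Qed.

Lemma partial_of_expr {n} (ts : seq (term n)) {f : vec n -> R} {x : vec n}
    {i : 'I_n} {l : R} :
  (forall y, Omega y -> f y = eval_expr ts y) -> Omega x ->
  derivable_pt_lim (fun t => f (line x i t)) 0 l -> l = eval_expr (d_expr i ts) x.
Proof.
move=> f_ts Ox df; have [x_pos _] := proj1 (Omega_sqn x) Ox.
apply: (uniqueness_limite _ 0 _ _ df).
apply: (dlim_local (g := fun t => eval_expr ts (line x i t))); last exact: d_expr_correct.
case: (Omega_line_near x i Ox) => d [d_pos Hd].
by exists d; split => // t /Hd; apply: f_ts.
Qed.

Definition Du_gamma {n : nat} (g : R) (x : vec n) : mat n :=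
  fun b j => Rpower (sqn x) (g / 2) * (kdelta b j + g * x b * x j / sqn x).

Definition D2u_gamma {n : nat} (g : R) (x : vec n) (b i j : 'I_n) : R :=
  g * Rpower (sqn x) (g / 2) / sqn x *
  ((g - 2) / sqn x * x i * x j * x b + kdelta j i * x b + kdelta b i * x j
   + kdelta b j * x i).

Lemma Rpower_pred (N e : R) : 0 < N -> Rpower N (e - 1) = Rpower N e / N.
Proof. by move=> N_pos; rewrite /Rminus Rpower_plus Rpower_Ropp Rpower_1. Qed.

Lemma eval_Du_expr {n} (g : R) (x : vec n) (b j : 'I_n) : 0 < sqn x ->
  eval_expr (d_expr j (u_expr g b)) x = Du_gamma g x b j.
Proof. by move=> x_pos; rewrite /Du_gamma /= Rpower_pred //; field; lra. Qed.

Lemma eval_D2u_expr {n} (g : R) (x : vec n) (b i j : 'I_n) : 0 < sqn x ->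
  eval_expr (d_expr i (d_expr j (u_expr g b))) x = D2u_gamma g x b i j.
Proof. by move=> x_pos; rewrite /D2u_gamma /= !Rpower_pred //; field; lra. Qed.

Lemma Du_eq {n} {g : R} {Du : vec n -> mat n} {x : vec n} :
  isDu (@Omega n) (u_gamma g) Du -> Omega x -> Du x = Du_gamma g x.
Proof.
move=> hDu Ox; have [x_pos _] := proj1 (Omega_sqn x) Ox.
apply: functional_extensionality => b; apply: functional_extensionality => j.
rewrite -eval_Du_expr //; apply: (partial_of_expr _ (f := fun y => u_gamma g y b)) => //.
- by move=> y /Omega_sqn [y_pos _]; rewrite eval_u_expr.
- exact: hDu.
Qed.

Lemma D2u_eq {n} {g : R} {Du : vec n -> mat n} {D2u : vec n -> 'I_n -> 'I_n -> 'I_n -> R}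
    {x : vec n} (b i j : 'I_n) :
  isDu (@Omega n) (u_gamma g) Du -> isD2u (@Omega n) Du D2u -> Omega x ->
  D2u x b i j = D2u_gamma g x b i j.
Proof.
move=> hDu hD2u Ox; have [x_pos _] := proj1 (Omega_sqn x) Ox.
rewrite -eval_D2u_expr //; apply: (partial_of_expr _ (f := fun y => Du y b j)) => //.
- move=> y Oy; have [y_pos _] := proj1 (Omega_sqn y) Oy.
  by rewrite (Du_eq hDu Oy) eval_Du_expr.
- exact: hD2u.
Qed.

(** * Matrices: determinant, inverse and the gradient of the dilation [K] *)

(* We transport the matrices of [Defs] to MathComp matrices to reuse the
   multiplicativity of the determinant and the Laplace/Cramer formulas. *)
(* [ring_scope] provides [\det] and [*m]; [R_scope] keeps priority. *)
Open Scope ring_scope.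
Open Scope R_scope.

Definition mx {n : nat} (P : mat n) : 'M[R]_n := \matrix_(i, j) P i j.

Lemma sum_rsum {n} (F : 'I_n -> R) : (\sum_(j < n) F j)%R = rsum F.
Proof. by []. Qed.

Definition mmul {n : nat} (P Q : mat n) : mat n :=
  fun a b => rsum (fun k => P a k * Q k b).

Definition is_inverse {n : nat} (P Q : mat n) : Prop :=
  forall a b, mmul P Q a b = kdelta a b.

Lemma det_mx {n} (P : mat n) : det P = \det (mx P).
Proof.
rewrite /det /determinant; apply: eq_bigr => s _.
rewrite /psign; case: (perm.odd_perm s) => /=;
  [rewrite GRing.expr1 | rewrite GRing.expr0];
  by congr Rmult; apply: eq_bigr => i _; rewrite mxE.
Qed.

Lemma mx_mmul {n} (P Q : mat n) : (mx P *m mx Q)%R = mx (mmul P Q).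
Proof.
apply/matrixP => a b; rewrite !mxE /mmul /rsum.
by apply: eq_bigr => k _; rewrite !mxE.
Qed.

Lemma mx_inverse {n} {P Q : mat n} : is_inverse P Q -> (mx P *m mx Q)%R = 1%:M%R.
Proof.
move=> PQ; rewrite mx_mmul; apply/matrixP => a b.
by rewrite !mxE PQ /kdelta; case: (a == b).
Qed.

Lemma det_ne0_of_inverse {n} {P Q : mat n} : is_inverse P Q -> det P <> 0.
Proof.
move=> PQ P0; have := f_equal determinant (mx_inverse PQ).
rewrite det_mulmx det1 -det_mx P0 GRing.mul0r => /esym; exact: R1_neq_R0.
Qed.

Lemma cofactor_of_inverse {n} {P Q : mat n} (a i : 'I_n) : is_inverse P Q ->
  cofactor (mx P) a i = det P * Q i a.
Proof.
move=> PQ.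
have adjE : (\adj (mx P) = \det (mx P) *: mx Q)%R.
  by rewrite -[LHS]mulmx1 -(mx_inverse PQ) mulmxA mul_adj_mx mul_scalar_mx.
by have := congr1 (fun M : 'M[R]_n => M i a) adjE; rewrite !mxE det_mx => ->.
Qed.

Lemma det_line {n} (P : mat n) (a i : 'I_n) (t : R) :
  \det (mx (madd P (mscale t (matE a i)))) = \det (mx P) + t * cofactor (mx P) a i.
Proof.
rewrite (expand_det_row _ a) [X in _ = X + _](expand_det_row _ a).
have cof j : cofactor (mx (madd P (mscale t (matE a i)))) a j = cofactor (mx P) a j.
  rewrite /cofactor; congr (_ * _)%R; congr determinant.
  apply/matrixP => k l; rewrite !mxE /madd /mscale /matE.
  by rewrite eq_sym (negbTE (neq_lift a k)) /=; ring.
rewrite !sum_rsum (@rsum_ext _ _ (fun j => mx P a j * cofactor (mx P) a j +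
   (t * cofactor (mx P) a i) * (kdelta j i * 1))).
  by rewrite rsum_add rsum_scal rsum_kdelta Rmult_1_r.
move=> j; rewrite cof !mxE /madd /mscale /matE eqxx /= /kdelta.
by rewrite -!RmultE -?RplusE; case: eqP => [->|_]; ring.
Qed.

Lemma det_mtm {n} (P : mat n) : det (mtm P) = det P ^ 2.
Proof.
rewrite !det_mx.
have -> : mx (mtm P) = ((mx P)^T *m mx P)%R.
  apply/matrixP => a b; rewrite !mxE /mtm /rsum.
  by apply: eq_bigr => k _; rewrite !mxE.
by rewrite det_mulmx det_tr /= Rmult_1_r.
Qed.

Lemma frob2_line {n} (P : mat n) (a i : 'I_n) (t : R) :
  frob2 (madd P (mscale t (matE a i))) = frob2 P + 2 * t * P a i + t ^ 2.
Proof.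
rewrite /frob2 (@rsum_ext _ _ (fun b => rsum (fun j => P b j ^ 2) +
   (2 * t * P a i + t ^ 2) * (kdelta b a * 1))).
  by rewrite rsum_add rsum_scal rsum_kdelta; ring.
move=> b; rewrite (@rsum_ext _ _ (fun j => P b j ^ 2
  + (2 * t * P b i + t ^ 2) * kdelta b a * (kdelta j i * 1))).
  by rewrite rsum_add rsum_scal rsum_kdelta /kdelta; case: (b =P a) => [->|_]; ring.
move=> j; rewrite /madd /mscale /matE /kdelta.
by case: (b == a); case: (j =P i) => [->|_] /=; ring.
Qed.

Lemma K_grad_val {n} (KP : mat n -> mat n) (P Q : mat n) (a i : 'I_n) :
  INR n <> 0 -> Kgrad KP -> is_inverse P Q ->
  KP P a i = (2 * P a i - 2 / INR n * frob2 P * Q i a) / Rpower (det P ^ 2) (/ INR n).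
Proof.
move=> n0 hK PQ; have detP0 := det_ne0_of_inverse PQ.
apply: (uniqueness_limite _ 0 _ _ (hK P detP0 a i)).
apply: (dlim_ext (g := fun t => (frob2 P + 2 * t * P a i + t ^ 2) /
   Rpower ((det P + t * (det P * Q i a)) ^ 2) (/ INR n))).
  move=> t; rewrite /Kfin frob2_line det_mtm det_mx det_line.
  by rewrite (cofactor_of_inverse a i PQ) -det_mx.
have detP2 : det P * det P <> 0 by apply: Rmult_integral_contrapositive.
apply/is_derive_Reals; rewrite /Rpower; auto_derive.
  rewrite Rmult_0_l Rplus_0_r Rmult_1_r; split; last by split; [apply: exp_neq_0|].
  by have := Rle_0_sqr (det P); rewrite /Rsqr; lra.
rewrite !Rmult_0_l !Rplus_0_r !Rmult_1_r.
have -> : det P ^ 2 = det P * det P by ring.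
by field; split; [|split; [apply: exp_neq_0|]].
Qed.

Section AlongUGamma.
Variables (n : nat) (g : R) (x : vec n).
Hypotheses (x_pos : 0 < sqn x) (g1 : 1 + g <> 0).

Let p := Rpower (sqn x) (g / 2).
Let p_pos : 0 < p := Rpower_pos _ _.

(* Sherman-Morrison: (I + g x x^T/|x|^2)^-1 = I - g/(1+g) x x^T/|x|^2. *)
Definition Du_gamma_inv : mat n :=
  fun b j => / p * (kdelta b j - g / (1 + g) * x b * x j / sqn x).

Lemma Du_gamma_inverse : is_inverse (Du_gamma g x) Du_gamma_inv.
Proof.
move=> a b; rewrite /mmul /Du_gamma /Du_gamma_inv -/p.
rewrite (@rsum_ext _ _ (fun k => 1 * (kdelta k a * kdelta k b)
   + (- (g / (1 + g)) / sqn x * x b) * (kdelta k a * x k)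
   + (g / sqn x * x a) * (kdelta k b * x k)
   + (- (g * (g / (1 + g))) / (sqn x * sqn x) * x a * x b) * (x k * x k))).
  rewrite !rsum_add !rsum_scal !rsum_kdelta sqn_rsum.
  by field; lra.
by move=> k; rewrite (kdelta_sym a k); field; lra.
Qed.

Lemma frob2_Du_gamma : frob2 (Du_gamma g x) = p ^ 2 * (INR n + 2 * g + g ^ 2).
Proof.
rewrite /frob2 /Du_gamma -/p.
rewrite (@rsum_ext _ _ (fun b => p ^ 2 * 1
   + (p ^ 2 * (2 * g + g ^ 2) / sqn x) * (x b * x b))).
  by rewrite rsum_add !rsum_scal rsum_const sqn_rsum; field; lra.
move=> b; rewrite (@rsum_ext _ _ (fun j => p ^ 2 * (kdelta j b * kdelta j b)
   + (2 * p ^ 2 * g / sqn x * x b) * (kdelta j b * x j)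
   + (p ^ 2 * g ^ 2 / (sqn x * sqn x) * x b * x b) * (x j * x j))).
  by rewrite !rsum_add !rsum_scal !rsum_kdelta kdelta_refl sqn_rsum; field; lra.
by move=> j; rewrite (kdelta_sym b j); field; lra.
Qed.

Definition K_scale : R := 2 / Rpower (det (Du_gamma g x) ^ 2) (/ INR n).
Definition K_diag : R := p * (1 - (INR n + 2 * g + g ^ 2) / INR n).
Definition K_rank1 : R :=
  p * (g / sqn x + (INR n + 2 * g + g ^ 2) * g / (INR n * (1 + g) * sqn x)).

Lemma K_grad_Du_gamma (KP : mat n -> mat n) (a i : 'I_n) :
  INR n <> 0 -> Kgrad KP ->
  KP (Du_gamma g x) a i = K_scale * (K_diag * kdelta a i + K_rank1 * x a * x i).
Proof.
move=> n0 hK; rewrite (K_grad_val KP _ _ a i n0 hK Du_gamma_inverse) frob2_Du_gamma.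
have := Rpower_pos (det (Du_gamma g x) ^ 2) (/ INR n).
rewrite /K_scale /K_diag /K_rank1 /Du_gamma /Du_gamma_inv -/p (kdelta_sym i a).
by move=> d_pos; field; repeat split; lra.
Qed.

End AlongUGamma.

Lemma null_tr_rank1_trivial {n} {M : mat n} {c A B : R} {x : vec n} :
  (forall a i, M a i = c * (A * kdelta a i + B * x a * x i)) ->
  c <> 0 -> A <> 0 -> A + B * sqn x <> 0 ->
  forall z, in_null_tr M z -> forall a, z a = 0.
Proof.
move=> ME c0 A0 AB0 z Mz.
set s := rsum (fun a => x a * z a).
(* componentwise, M^T z = 0 reads  A z_i + B s x_i = 0 *)
have comp i : A * z i + B * x i * s = 0.
  apply: (Rmult_eq_reg_l c) => //; rewrite Rmult_0_r -(Mz i).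
  rewrite (@rsum_ext _ _ (fun a => (c * A) * (kdelta a i * z a)
    + (c * B * x i) * (x a * z a))); last by move=> a; rewrite ME; ring.
  by rewrite rsum_add !rsum_scal rsum_kdelta -/s; ring.
(* contracting with x gives (A + B|x|^2) s = 0 *)
have s0 : s = 0.
  have : rsum (fun i => x i * (A * z i + B * x i * s)) = 0.
    by apply: rsum_eq0 => i; rewrite comp; ring.
  rewrite (@rsum_ext _ _ (fun i => A * (x i * z i) + (B * s) * (x i * x i)));
    last by move=> i; ring.
  rewrite rsum_add !rsum_scal -/s sqn_rsum => e.
  have : (A + B * sqn x) * s = 0 by rewrite -e; ring.
  by case/Rmult_integral.
by move=> a; have := comp a; rewrite s0 Rmult_0_r Rplus_0_r; case/Rmult_integral.
Qed.

Lemma orth_proj_trivial {n} {M Pi : mat n} :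
  (forall z, in_null_tr M z -> forall a, z a = 0) ->
  orth_proj_null_tr M Pi -> forall a h, Pi a h = 0.
Proof.
move=> triv [Pi_null _] a h; rewrite -(triv _ (Pi_null (basis h)) a) /matvec.
rewrite (@rsum_ext _ _ (fun k => kdelta k h * Pi a k)) ?rsum_kdelta //.
by move=> k; rewrite /basis /kdelta; ring.
Qed.

Lemma K_coefs_nondegenerate {n} (g : R) (x : vec n) :
  2 <= INR n -> 0 < sqn x -> -1 < g -> g <> 0 ->
  [/\ K_scale n g x <> 0, K_diag n g x <> 0 & K_diag n g x + K_rank1 n g x * sqn x <> 0].
Proof.
move=> n2 x_pos g1 g0; have p_pos := Rpower_pos (sqn x) (g / 2).
have gg2 : g * (g + 2) <> 0 by apply: Rmult_integral_contrapositive; split; lra.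
split.
- have := Rpower_pos (det (Du_gamma g x) ^ 2) (/ INR n); rewrite /K_scale => d_pos.
  by apply: Rmult_integral_contrapositive; split; [lra | apply: Rinv_neq_0_compat; lra].
- have -> : K_diag n g x = - (Rpower (sqn x) (g / 2) * (g * (g + 2)) / INR n).
    by rewrite /K_diag; field; lra.
  apply: Ropp_neq_0_compat; apply: Rmult_integral_contrapositive.
  by split; [apply: Rmult_integral_contrapositive; split; lra | apply: Rinv_neq_0_compat; lra].
- have -> : K_diag n g x + K_rank1 n g x * sqn x =
      Rpower (sqn x) (g / 2) * ((INR n - 1) * (g * (g + 2))) / (INR n * (1 + g)).
    by rewrite /K_diag /K_rank1; field; repeat split; lra.
  apply: Rmult_integral_contrapositive; split.
  + apply: Rmult_integral_contrapositive; split; first lra.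
    by apply: Rmult_integral_contrapositive; split; lra.
  + by apply: Rinv_neq_0_compat; apply: Rmult_integral_contrapositive; split; lra.
Qed.

Lemma K_grad_contract_D2u {n} (g : R) (x : vec n) (KPx : mat n) (i : 'I_n) :
  0 < sqn x -> 1 + g <> 0 -> INR n <> 0 ->
  (forall b j, KPx b j = K_scale n g x * (K_diag n g x * kdelta b j + K_rank1 n g x * x b * x j)) ->
  rsum (fun j => rsum (fun b => KPx b j * D2u_gamma g x b i j)) = 0.
Proof.
move=> x_pos g1 n0 KPxE.
set C := K_scale n g x * (g * Rpower (sqn x) (g / 2) / sqn x).
set A := K_diag n g x; set B := K_rank1 n g x.
rewrite (@rsum_ext _ _ (fun j =>
   (C*A*(g-2)/sqn x*x i + C*B*(g-2)/sqn x * x i * sqn x + C*B*x i + C*B*x i) * (x j * x j)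
 + (C*A + C*A + C*B*sqn x) * (kdelta j i * x j)
 + (C*A*x i) * 1)).
  rewrite !rsum_add !rsum_scal rsum_kdelta rsum_const sqn_rsum.
  have p_pos := Rpower_pos (sqn x) (g / 2).
  by rewrite /C /A /B /K_diag /K_rank1; field; repeat split; lra.
move=> j; rewrite (@rsum_ext _ _ (fun b =>
   (C*A*(g-2)/sqn x * x i * x j) * (kdelta b j * x b)
 + (C*A*kdelta j i) * (kdelta b j * x b)
 + (C*A*x j) * (kdelta b j * kdelta b i)
 + (C*A*x i) * (kdelta b j * kdelta b j)
 + (C*B*(g-2)/sqn x * x i * x j * x j) * (x b * x b)
 + (C*B*kdelta j i * x j) * (x b * x b)
 + (C*B*x j * x j) * (kdelta b i * x b)
 + (C*B*x j * x i) * (kdelta b j * x b))).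
  by rewrite !rsum_add !rsum_scal !rsum_kdelta kdelta_refl sqn_rsum; field; lra.
by move=> b; rewrite KPxE /D2u_gamma /C -/A -/B; field; lra.
Qed.

(* For gamma = 0 the Hessian vanishes; otherwise K_P(Du) is invertible, so the
   projection [Pi] is zero and only the infinity-Laplacian part remains. *)
Lemma Qinf_u_gamma {n} (g : R) (x : vec n) (KP : mat n -> mat n)
    (KPPx : 'I_n -> 'I_n -> 'I_n -> 'I_n -> R) (Pi : mat n) (a : 'I_n) :
  (2 <= n)%N -> -1 < g -> 0 < sqn x -> Kgrad KP ->
  orth_proj_null_tr (KP (Du_gamma g x)) Pi ->
  Qinf_comp (KP (Du_gamma g x)) KPPx Pi (D2u_gamma g x) a = 0.
Proof.
move=> n2 g1 x_pos hK hPi.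
have n2R : 2 <= INR n by apply: (le_INR 2); apply/leP.
have n0 : INR n <> 0 by lra.
have g1' : 1 + g <> 0 by lra.
have KPE b j := K_grad_Du_gamma n g x x_pos g1' KP b j n0 hK.
rewrite /Qinf_comp; case: (Req_dec g 0) => [g0 | g0].
  do 3 (apply: rsum_eq0 => ?).
  by rewrite /D2u_gamma g0 /Rdiv !Rmult_0_l Rmult_0_r.
have [c0 A0 AB0] := K_coefs_nondegenerate g x n2R x_pos g1 g0.
have Pi0 := orth_proj_trivial (null_tr_rank1_trivial KPE c0 A0 AB0) hPi.
rewrite (@rsum_ext _ _ (fun i => KP (Du_gamma g x) a i *
    rsum (fun j => rsum (fun b => KP (Du_gamma g x) b j * D2u_gamma g x b i j)))).
  apply: rsum_eq0 => i; by rewrite (K_grad_contract_D2u g x _ i x_pos g1' n0 KPE) Rmult_0_r.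
move=> i; rewrite -rsum_scal; apply: rsum_ext => j; rewrite -rsum_scal.
apply: rsum_ext => b; rewrite rsum_eq0; first ring.
by move=> k; rewrite Pi0; ring.
Qed.

Lemma u_gamma_boundary {n} (g : R) (x : vec n) : boundary_Omega x -> u_gamma g x = x.
Proof.
rewrite /u_gamma; case => [x1 | ->]; case: Req_dec_T => // x0.
- by lra.
- apply: functional_extensionality => k.
  by rewrite /vscale x1 /Rpower ln_1 Rmult_0_r exp_0; ring.
- by exfalso; apply: x0; rewrite norm_sqn /sqn /dot rsum_eq0 ?sqrt_0 // => i; rewrite /vzero; ring.
Qed.

Lemma u_gamma_scale {n} (g : R) (x : vec n) : 0 < norm x ->
  u_gamma g x = vscale (Rpower (norm x) g) x.
Proof. by move=> x_pos; rewrite /u_gamma; case: Req_dec_T => // x0; lra. Qed.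

Lemma norm_u_gamma {n} (g : R) (x : vec n) : 0 < norm x ->
  norm (u_gamma g x) = Rpower (norm x) (g + 1).
Proof.
move=> x_pos; rewrite u_gamma_scale // norm_scale Rabs_pos_eq;
  last exact: Rlt_le (Rpower_pos _ _).
by rewrite Rpower_plus Rpower_1.
Qed.

(* |u_gamma(y)| = |y|^(gamma+1) -> 0 as y -> 0, since gamma + 1 > 0. *)
Lemma u_gamma_cont_at_0 {n} (g : R) (x : vec n) (a : 'I_n) : -1 < g -> sqn x = 0 ->
  cont_at x (fun y => u_gamma g y a).
Proof.
move=> g1 x0 e e_pos.
have ux : u_gamma g x a = 0.
  rewrite /u_gamma; case: Req_dec_T => // nx.
  by exfalso; apply: nx; rewrite norm_sqn x0 sqrt_0.
exists (Rpower e (/ (g + 1))); split; first exact: Rpower_pos.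
move=> y; rewrite ux Rminus_0_r.
have -> : dist y x = norm y.
  rewrite /dist; congr norm; apply: functional_extensionality => k.
  by rewrite (coord_eq0 x k x0) Rminus_0_r.
move=> y_lt; rewrite /u_gamma; case: Req_dec_T => ny; first by rewrite /vzero Rabs_R0.
have y_pos : 0 < norm y by have := sqrt_pos (sqn y); rewrite -norm_sqn; lra.
rewrite /vscale Rabs_mult Rabs_pos_eq; last exact: Rlt_le (Rpower_pos _ _).
apply: (Rle_lt_trans _ (Rpower (norm y) g * norm y)).
  by apply: Rmult_le_compat_l; [apply: Rlt_le; apply: Rpower_pos | apply: coord_le_norm].
rewrite -{2}(Rpower_1 (norm y)) // -Rpower_plus.
have -> : e = Rpower (Rpower e (/ (g + 1))) (g + 1).
  by rewrite Rpower_mult Rinv_l ?Rpower_1 //; lra.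
by apply: Rlt_Rpower_l; [lra | split].
Qed.

Lemma u_gamma_cont {n} (g : R) : -1 < g -> cont_map (@closure_Omega n) (u_gamma g).
Proof.
move=> g1 a; apply: cont_on_of_cont_at => x _.
case: (Req_dec (sqn x) 0) => [x0 | x_ne0]; first exact: u_gamma_cont_at_0.
have x_pos : 0 < sqn x by have := sqn_ge0 x; lra.
apply: (cont_at_local x (h := eval_expr (u_expr g a))); last exact: cont_at_eval_expr.
case: (sqn_pos_near x x_pos) => d [d_pos Hd].
by exists d; split => // y /Hd y_pos; rewrite eval_u_expr.
Qed.

Lemma u_gamma_solution {n} (g : R) : (2 <= n)%N -> -1 < g ->
  is_Qinf_solution (@u_gamma n g).
Proof.
move=> n2 g1; split; first exact: u_gamma_smooth.
split; first exact: u_gamma_cont.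
split; first by move=> x; apply: u_gamma_boundary.
move=> Du D2u hDu hD2u x Ox; have [x_pos _] := proj1 (Omega_sqn x) Ox.
have -> : D2u x = D2u_gamma g x.
  apply: functional_extensionality => b; apply: functional_extensionality => i.
  by apply: functional_extensionality => j; apply: (D2u_eq b i j hDu hD2u Ox).
rewrite (Du_eq hDu Ox); split.
- by apply: det_ne0_of_inverse (Du_gamma_inverse n g x x_pos _); lra.
- by move=> KP KPP Pi hK _ hPi a; apply: Qinf_u_gamma.
Qed.

Lemma u_gamma_maps_Omega {n} (g : R) (x : vec n) : -1 < g -> Omega x -> Omega (u_gamma g x).
Proof.
move=> g1 [x_pos x_lt1]; rewrite /Omega norm_u_gamma //; split; first exact: Rpower_pos.
rewrite /Rpower -[X in _ < X]exp_0; apply: exp_increasing; apply: Rmult_pos_neg; first lra.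
by rewrite -ln_1; apply: ln_increasing.
Qed.

Lemma u_gamma_comp_inv {n} (g1 g2 : R) (x : vec n) :
  (1 + g1) * (1 + g2) = 1 -> Omega x -> u_gamma g2 (u_gamma g1 x) = x.
Proof.
move=> g12 [x_pos _].
have ux_pos : 0 < norm (u_gamma g1 x) by rewrite norm_u_gamma //; apply: Rpower_pos.
rewrite (u_gamma_scale g2 _ ux_pos) norm_u_gamma // (u_gamma_scale g1 _ x_pos).
apply: functional_extensionality => k.
rewrite /vscale Rpower_mult -Rmult_assoc -Rpower_plus.
have -> : (g1 + 1) * g2 + g1 = 0 by nra.
by rewrite Rpower_O //; ring.
Qed.

Lemma u_gamma_diffeo {n} (g : R) : -1 < g -> diffeo_onto_self (@Omega n) (@u_gamma n g).
Proof.
move=> g1; set g' := / (1 + g) - 1.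
have g'1 : -1 < g' by have := Rinv_0_lt_compat (1 + g); rewrite /g'; lra.
have gg' : (1 + g) * (1 + g') = 1 by rewrite /g'; field; lra.
split; first exact: u_gamma_smooth.
split; first by move=> x; apply: u_gamma_maps_Omega.
exists (u_gamma g'); split; first exact: u_gamma_smooth.
split; first by move=> y; apply: u_gamma_maps_Omega.
by split=> x; apply: u_gamma_comp_inv; rewrite // Rmult_comm.
Qed.

(* Evaluating at x = e_0 / 2 recovers gamma from u_gamma. *)
Lemma u_gamma_inj {n} (g1 g2 : R) : (0 < n)%N ->
  @u_gamma n g1 = @u_gamma n g2 -> g1 = g2.
Proof.
move=> n_pos u12; set i0 := Ordinal n_pos.
set x0 : vec n := fun k => / 2 * kdelta k i0.
have x0_sqn : sqn x0 = / 4.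
  rewrite /sqn /dot (@rsum_ext _ _ (fun k => / 4 * (kdelta k i0 * kdelta k i0))).
    by rewrite rsum_scal rsum_kdelta kdelta_refl; ring.
  by move=> k; rewrite /x0; field.
have := congr1 (fun u => u x0 i0) u12; rewrite /= !u_gamma_val ?x0_sqn; try lra.
rewrite /x0 kdelta_refl => e1.
have : Rpower (/ 4) (g1 / 2) = Rpower (/ 4) (g2 / 2) by nra.
rewrite /Rpower => /exp_inv e2.
have : ln (/ 4) < 0 by rewrite -ln_1; apply: ln_increasing; lra.
by nra.
Qed.

Theorem theorem2 (n : nat) (hn : (2 <= n)%N) :
  (forall gamma : R, -1 < gamma ->
     is_Qinf_solution (@u_gamma n gamma) /\
     diffeo_onto_self (@Omega n) (@u_gamma n gamma)) /\
  (forall g1 g2 : R, -1 < g1 -> -1 < g2 ->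
     @u_gamma n g1 = @u_gamma n g2 -> g1 = g2).
Proof.
split.
- by move=> g g1; split; [apply: u_gamma_solution | apply: u_gamma_diffeo].
- by move=> g1 g2 _ _; apply: u_gamma_inj; apply: leq_trans hn.
Qed.
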